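(* Let $G$ be a bipartite graph with $v$ vertices in each of its two colour classes and with $e$ edges. If the girth of $G$ is at least $8$, then $$e<v^{4/3}+\frac{2}{3}v-\frac{2}{9}v^{2/3}-\frac{20}{81}v^{1/3}.$$ *)

From HB Require Import structures.
From mathcomp Require Import all_boot all_order all_algebra.
From mathcomp Require Import all_classical all_reals all_analysis.
Set Implicit Arguments. Unset Strict Implicit. Unset Printing Implicit Defensive.
Import Order.TTheory GRing.Theory Num.Theory.

(* A bipartite graph with colour classes 'I_v (left) and 'I_v (right) is given
   by its biadjacency relation E : left -> right -> bool.  The underlying
   simple graph has vertex set 'I_v + 'I_v. *)
Definition bip_adj (v : nat) (E : 'I_v -> 'I_v -> bool) (x y : 'I_v + 'I_v) : bool :=
  match x, y with
  | inl i, inr j => E i j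
  | inr j, inl i => E i j
  | _, _ => false
  end.

Definition bip_edges (v : nat) (E : 'I_v -> 'I_v -> bool) : nat :=
  #|[set p : 'I_v * 'I_v | E p.1 p.2]|.

Definition has_cycle_of_length (V : Type) (adj : V -> V -> bool) (n : nat) : Prop :=
  exists c : nat -> V,
    (forall i j, i < n -> j < n -> c i = c j -> i = j) /\
    (forall i, i < n -> adj (c i) (c (i.+1 %% n))).

Definition girth_ge (V : Type) (adj : V -> V -> bool) (g : nat) : Prop :=
  forall n, 3 <= n -> n < g -> ~ has_cycle_of_length adj n.

(* Let the bipartite graph have parts of sizes m and n and e edges, and let
   P3 = sum over the edges xy of (deg x - 1)(deg y - 1) count its paths with three
   edges.  Without 4- and 6-cycles two vertices on opposite sides are joined by at
   most one path of length 1 or 3, so P3 + e <= m n.  When all degrees are at least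
   2, the AM-GM inequality along the edges followed by Jensen's inequality for the
   convex function t ln (t - 1) gives m n P3 >= e (e - m) (e - n).  Hence
   e (e - m) (e - n) <= m n (m n - e); vertices of degree at most 1 are peeled off
   by induction, the inequality surviving each deletion, and the cases e <= m or
   e <= n are checked directly.  For m = n = v = s^3 the inequality keeps e below
   the first terms of the expansion in s of its positive root. *)

From HB Require Import structures.
From mathcomp Require Import all_boot all_order all_algebra.
From mathcomp Require Import all_classical all_reals all_analysis.
From mathcomp Require Import ring lra zify.
Import Order.TTheory GRing.Theory Num.Theory.

Definition converse {T1 T2 : Type} (E : T1 -> T2 -> bool) : T2 -> T1 -> bool :=
  fun y x => E x y.

Definition deg {T1 T2 : finType} (E : T1 -> T2 -> bool) (B : {set T2}) (x : T1) : nat :=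
  \sum_(y in B) E x y.

Definition edges {T1 T2 : finType} (E : T1 -> T2 -> bool) (A : {set T1}) (B : {set T2}) : nat :=
  \sum_(x in A) deg E B x.

(* Paths with three edges, counted by their middle edge [x y]. *)
Definition paths3 {T1 T2 : finType} (E : T1 -> T2 -> bool) (A : {set T1}) (B : {set T2}) : nat :=
  \sum_(x in A) \sum_(y in B) E x y * ((deg E B x).-1 * (deg (converse E) A y).-1).

Definition C4free {T1 T2 : eqType} (E : T1 -> T2 -> bool) : Prop :=
  forall x1 x2 y1 y2, x1 != x2 -> y1 != y2 ->
    E x1 y1 -> E x2 y1 -> E x2 y2 -> E x1 y2 -> False.

Definition C6free {T1 T2 : eqType} (E : T1 -> T2 -> bool) : Prop :=
  forall x1 x2 x3 y1 y2 y3, x1 != x2 -> x2 != x3 -> x1 != x3 ->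
    y1 != y2 -> y2 != y3 -> y1 != y3 ->
    E x1 y1 -> E x2 y1 -> E x2 y2 -> E x3 y2 -> E x3 y3 -> E x1 y3 -> False.

Lemma ucycle_has_cycle (V : eqType) (adj : rel V) (x : V) (p : seq V) :
  ucycle adj (x :: p) -> has_cycle_of_length adj (size p).+1.
Proof.
case/andP=> cyc uq; exists (nth x (x :: p)); split.
  by move=> i j ilt jlt /eqP; rewrite nth_uniq // => /eqP.
move=> i ilt; have xi : nth x (x :: p) i \in x :: p by rewrite mem_nth.
have := next_cycle cyc xi; rewrite next_nth xi index_uniq //.
have [ip|pi] := ltnP i (size p); first by rewrite modn_small.
have -> : i = size p by apply/eqP; rewrite eqn_leq pi -ltnS ilt.
by rewrite modnn (nth_default x (leqnn (size p))).
Qed.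

Lemma eq_inl (T1 T2 : eqType) (a b : T1) : (@inl T1 T2 a == inl b) = (a == b).
Proof. by []. Qed.

Lemma eq_inr (T1 T2 : eqType) (a b : T2) : (@inr T1 T2 a == inr b) = (a == b).
Proof. by []. Qed.

Lemma girth8_C4free {v : nat} {E : 'I_v -> 'I_v -> bool} : girth_ge (bip_adj E) 8 -> C4free E.
Proof.
move=> G x1 x2 y1 y2 x12 y12 E11 E21 E22 E12; apply: (G 4) => //.
apply: (@ucycle_has_cycle _ _ (inl x1) [:: inr y1; inl x2; inr y2]).
by rewrite /ucycle /= E11 E21 E22 E12 !inE !eq_inl !eq_inr (negbTE x12) (negbTE y12).
Qed.

Lemma girth8_C6free {v : nat} {E : 'I_v -> 'I_v -> bool} : girth_ge (bip_adj E) 8 -> C6free E.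
Proof.
move=> G x1 x2 x3 y1 y2 y3 x12 x23 x13 y12 y23 y13 E11 E21 E22 E32 E33 E13.
apply: (G 6) => //.
apply: (@ucycle_has_cycle _ _ (inl x1) [:: inr y1; inl x2; inr y2; inl x3; inr y3]).
rewrite /ucycle /= E11 E21 E22 E32 E33 E13 !inE !eq_inl !eq_inr.
by rewrite (negbTE x12) (negbTE x13) (negbTE x23) (negbTE y12) (negbTE y13) (negbTE y23).
Qed.

Lemma bip_edgesE (v : nat) (E : 'I_v -> 'I_v -> bool) :
  bip_edges E = edges E [set: 'I_v] [set: 'I_v].
Proof.
rewrite /bip_edges /edges /deg pair_big /= -sum1_card [RHS]big_mkcond [LHS]big_mkcond /=.
by apply: eq_bigr => p _; rewrite !inE; case: (E p.1 p.2).
Qed.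

Lemma sum_nat_bool_le1 {I : finType} (P : pred I) (b : pred I) :
  {in P &, forall i j, b i -> b j -> i = j} -> \sum_(i | P i) b i <= 1.
Proof.
move=> b_inj; case: (pickP [pred i | P i && b i]) => [i /andP[Pi bi] | no_i].
  rewrite (bigD1 i) //= bi big1 // => j /andP[Pj ji].
  by apply/eqP; rewrite eqb0; apply: contra ji => bj; rewrite (b_inj j i).
by rewrite big1 // => j Pj; have := no_i j; rewrite /= Pj /= => ->.
Qed.

Lemma sum_nat_andb_neq {I : finType} {A : {set I}} (b : pred I) {i0 : I} :
  i0 \in A -> b i0 -> \sum_(i in A) (b i && (i != i0)) = (\sum_(i in A) b i).-1.
Proof.
move=> Ai0 bi0; rewrite (bigD1 i0) //= [in RHS](bigD1 i0) //= eqxx andbF bi0.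
by apply: eq_bigr => i /andP[_ ->]; rewrite andbT.
Qed.

Section BipartiteCounting.
Context {T1 T2 : finType} (E : T1 -> T2 -> bool).
Implicit Types (A : {set T1}) (B : {set T2}).

Lemma edges_converse A B : edges (converse E) B A = edges E A B.
Proof. exact: exchange_big. Qed.

Lemma edges_le_mul A B : edges E A B <= #|A| * #|B|.
Proof.
rewrite -sum_nat_const; apply: leq_sum => x _.
by rewrite -[X in _ <= X]muln1 -sum_nat_const; apply: leq_sum => y _; apply: leq_b1.
Qed.

Lemma edges_setD1 A B x : x \in A -> edges E A B = deg E B x + edges E (A :\ x) B.
Proof. exact: big_setD1. Qed.

Definition path3 x y x' y' := [&& E x y, E x' y, E x' y', x != x' & y != y'].

Lemma sum_path3_middle A B x' y : x' \in A -> y \in B ->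
  \sum_(x in A) \sum_(y' in B) path3 x y x' y'
    = E x' y * ((deg E B x').-1 * (deg (converse E) A y).-1).
Proof.
move=> Ax' By; have [Ex'y|] := boolP (E x' y); last first.
  by move/negbTE=> nE; rewrite big1 // => x _; rewrite big1 // => y' _; rewrite /path3 nE andbF.
rewrite mul1n mulnC /deg -(sum_nat_andb_neq (converse E y) Ax') //.
rewrite -(sum_nat_andb_neq (E x') By) //.
rewrite big_distrl; apply: eq_bigr => x _; rewrite big_distrr; apply: eq_bigr => y' _.
rewrite /path3 /converse Ex'y (eq_sym y).
by case: (E x y); case: (x != x'); case: (E x' y'); case: (y' != y).
Qed.

Hypotheses (C4 : C4free E) (C6 : C6free E).

Lemma path3_unique A B x y' :
  E x y' + \sum_(y in B) \sum_(x' in A) path3 x y x' y' <= 1.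
Proof.
have [Exy'|_] := boolP (E x y').
  rewrite big1 // => y _; rewrite big1 // => x' _.
  apply/eqP; rewrite eqb0; apply/and5P => -[Exy Ex'y Ex'y' xx' yy'].
  exact: (C4 x x' y y' xx' yy' Exy Ex'y Ex'y' Exy').
rewrite add0n pair_big /=; apply: sum_nat_bool_le1 => -[y1 x1] [y2 x2] _ _ /=.
have [<-|y1y2] := eqVneq y1 y2; have [<-|x1x2] := eqVneq x1 x2 => //.
- move=> /and5P[_ Ex1y1 Ex1y' _ y1y'] /and5P[_ Ex2y1 Ex2y' _ _].
  by case: (C4 x1 x2 y1 y' x1x2 y1y' Ex1y1 Ex2y1 Ex2y' Ex1y').
- move=> /and5P[Exy1 Ex1y1 _ xx1 _] /and5P[Exy2 Ex1y2 _ _ _].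
  by case: (C4 x x1 y1 y2 xx1 y1y2 Exy1 Ex1y1 Ex1y2 Exy2).
- move=> /and5P[Exy1 Ex1y1 Ex1y' xx1 y1y'] /and5P[Exy2 Ex2y2 Ex2y' xx2 y2y'].
  have y'y2 : y' != y2 by rewrite eq_sym.
  by case: (C6 x x1 x2 y1 y' y2 xx1 x1x2 xx2 y1y' y'y2 y1y2 Exy1 Ex1y1 Ex1y' Ex2y' Ex2y2 Exy2).
Qed.

Lemma paths3_add_edges_le A B : paths3 E A B + edges E A B <= #|A| * #|B|.
Proof.
have le_pairs : \sum_(x in A) \sum_(y' in B)
    (E x y' + \sum_(y in B) \sum_(x' in A) path3 x y x' y') <= #|A| * #|B|.
  rewrite -sum_nat_const; apply: leq_sum => x _.
  by rewrite -[#|B|]muln1 -sum_nat_const; apply: leq_sum => y' _; apply: path3_unique.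
apply: leq_trans le_pairs; rewrite addnC.
under eq_bigr do rewrite big_split /=.
rewrite big_split /= leq_add2l; apply/eq_leq/esym.
under eq_bigr do rewrite exchange_big /=.
under eq_bigr do (under eq_bigr do rewrite exchange_big /=).
rewrite exchange_big /=; under eq_bigr do rewrite exchange_big /=.
rewrite exchange_big /=; apply: eq_bigr => x' Ax'; apply: eq_bigr => y By.
exact: sum_path3_middle.
Qed.

End BipartiteCounting.

Local Open Scope ring_scope.

Lemma natr_pred (R : pzRingType) (d : nat) : (0 < d)%N -> d.-1%:R = d%:R - 1 :> R.
Proof. by move=> d0; rewrite -subn1 natrB. Qed.

Section LnConvexity.
Variable R : realType.

Lemma is_derive_ge0_ndecr {f f' : R -> R} {a b : R} : a <= b ->
  (forall x, a <= x <= b -> is_derive x 1 f (f' x)) ->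
  (forall x, a < x < b -> 0 <= f' x) -> f a <= f b.
Proof.
move=> ab df df_ge0.
have dfi x : x \in `[a, b] -> is_derive x 1 f (f' x) by rewrite in_itv; exact: df.
apply: (@ger0_derive1_ndecr _ f a b) => //.
- by move=> x; rewrite in_itv /= => /andP[ax xb]; have [] := dfi x; rewrite // in_itv /= !ltW.
- move=> x; rewrite in_itv /= => /andP[ax xb]; rewrite derive1E.
  have [_ ->] : is_derive x 1 f (f' x) by apply: df; rewrite !ltW.
  by apply: df_ge0; rewrite ax.
- by apply: derivable_within_continuous => x /dfi [].
Qed.

Lemma is_derive_le0_nincr {f f' : R -> R} {a b : R} : a <= b ->
  (forall x, a <= x <= b -> is_derive x 1 f (f' x)) ->
  (forall x, a < x < b -> f' x <= 0) -> f b <= f a.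
Proof.
move=> ab df df_le0; rewrite -lerN2.
apply: (@is_derive_ge0_ndecr (fun x => - f x) (fun x => - f' x)) => // [x /df|x /df_le0].
  exact: is_deriveN.
by rewrite oppr_ge0.
Qed.

Lemma ln_ge_1V (t : R) : 0 < t -> 1 - t^-1 <= ln t.
Proof.
move=> t0; have h : -1 < t^-1 - 1 by rewrite ltrBrDr addrC subrr invr_gt0.
have := le_ln1Dx h; rewrite addrC addrNK lnV ?posrE //; lra.
Qed.

Lemma ln_le_subr1 (t : R) : 0 < t -> ln t <= t - 1.
Proof. by move=> t0; have := @le_ln1Dx R (t - 1); rewrite subrKC; apply; lra. Qed.

Lemma ln_ge_ratio (c y : R) : 1 <= c -> 0 < y -> 1 <= c * y ->
  (1 + c) * (y - 1) <= (1 + c * y) * ln y.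
Proof.
move=> c1 y0 cy1.
pose phi u := (1 + c * u) * ln u - (1 + c) * (u - 1).
pose phi' u := c * ln u + (1 + c * u) / u - (1 + c).
(* [phi] vanishes at 1, increases on [[1, +oo)] and decreases on [[1/c, 1]]. *)
have dphi (u : R) : 0 < u -> is_derive u 1 phi (phi' u).
  move=> u0; have := is_deriveB
    (is_deriveM (is_deriveD (is_derive_cst (1 : R) u 1)
       (is_deriveM (is_derive_cst c u 1) (is_derive_id u (1 : R)))) (is_derive1_ln u0))
    (is_deriveM (is_derive_cst (1 + c) u 1)
       (is_deriveB (is_derive_id u (1 : R)) (is_derive_cst (1 : R) u 1))).
  by move/is_derive_eq; apply; rewrite !fctE /= /GRing.scale /= /phi'; ring.
have phi'E u : 0 < u -> phi' u = c * ln u + u^-1 - 1.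
  by move=> u0; rewrite /phi'; field; rewrite gt_eqF.
have phi1 : phi 1 = 0 by rewrite /phi ln1; ring.
suff : 0 <= phi y by rewrite /phi subr_ge0.
have [y1|y1] := lerP 1 y.
  rewrite -phi1; apply: (is_derive_ge0_ndecr y1) => [x /andP[x1 _]|x /andP[x1 _]].
    by apply: dphi; lra.
  have x0 : 0 < x by lra.
  have := @ln_ge_1V x x0; have : 0 <= ln x by apply: ln_ge0; lra.
  rewrite phi'E //; nra.
rewrite -phi1; apply: (is_derive_le0_nincr (ltW y1)) => [x /andP[yx _]|x /andP[yx x1]].
  by apply: dphi; lra.
have x0 : 0 < x by lra.
have cx1 : 1 <= c * x by apply: le_trans cy1 _; rewrite ler_pM2l //; lra.
have lnx : c * ln x <= c * (x - 1) by rewrite ler_pM2l ?ln_le_subr1 //; lra.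
suff : c * (x - 1) + x^-1 - 1 <= 0 by rewrite phi'E //; lra.
have -> : c * (x - 1) + x^-1 - 1 = (x - 1) * (c * x - 1) / x by field; rewrite gt_eqF.
by rewrite pmulr_lle0 ?invr_gt0 // mulr_le0_ge0 //; lra.
Qed.

(* The tangent at [D] of [t |-> t * ln (t - 1)], which is convex on [[2, +oo)]. *)
Lemma mul_ln_subr1_tangent (d D : R) : 2 <= d -> 2 <= D ->
  d * ln (D - 1) + D * (d - D) / (D - 1) <= d * ln (d - 1).
Proof.
move=> d2 D2; have c0 : 0 < D - 1 by lra.
set c := D - 1; set y := (d - 1) / c.
have y0 : 0 < y by rewrite divr_gt0 //; lra.
have cy : c * y = d - 1 by rewrite mulrC divfK ?gt_eqF.
have key : (1 + c) * (y - 1) <= (1 + c * y) * ln y.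
  by apply: ln_ge_ratio; rewrite ?cy /c; lra.
have lny : ln y = ln (d - 1) - ln c by rewrite ln_div ?posrE //; lra.
have lhs : (1 + c) * (y - 1) = D * (d - D) / c by rewrite /y /c; field; rewrite gt_eqF.
rewrite lny lhs cy subrKC mulrBr in key; lra.
Qed.

Lemma jensen_mul_ln_subr1 {I : finType} (A : {set I}) (d : I -> R) :
  (0 < #|A|)%N -> (forall x, x \in A -> 2 <= d x) ->
  (\sum_(x in A) d x) * ln ((\sum_(x in A) d x) / #|A|%:R - 1)
    <= \sum_(x in A) d x * ln (d x - 1).
Proof.
move=> A0 d2; set e := \sum_(x in A) d x; set D := e / #|A|%:R.
have m0 : 0 < #|A|%:R :> R by rewrite ltr0n.
have eD : e = #|A|%:R * D by rewrite /D mulrC divfK ?gt_eqF.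
have D2 : 2 <= D.
  rewrite /D ler_pdivlMr // mulrC mulr_natl -sumr_const.
  exact: ler_sum.
have tangent_sum : \sum_(x in A) (d x * ln (D - 1) + D * (d x - D) / (D - 1))
    <= \sum_(x in A) d x * ln (d x - 1).
  by apply: ler_sum => x xA; apply: mul_ln_subr1_tangent => //; apply: d2.
suff <- : \sum_(x in A) (d x * ln (D - 1) + D * (d x - D) / (D - 1)) = e * ln (D - 1) by [].
rewrite big_split /= -mulr_suml -/e -mulr_suml -mulr_sumr sumrB -/e sumr_const eD.
by rewrite mulr_natl subrr mulr0 mul0r addr0.
Qed.

Lemma expR_mean_le {I : finType} (P : pred I) (w z : I -> R) :
  (forall i, P i -> 0 <= w i) -> 0 < \sum_(i | P i) w i ->
  (\sum_(i | P i) w i) * expR ((\sum_(i | P i) w i * z i) / \sum_(i | P i) w i)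
    <= \sum_(i | P i) w i * expR (z i).
Proof.
move=> w0 W0; set W := \sum_(i | P i) w i; set mu := _ / W.
have tangent i : P i -> expR mu * (w i + w i * z i - mu * w i) <= w i * expR (z i).
  move=> Pi; have -> : expR (z i) = expR mu * expR (z i - mu) by rewrite -expRD subrKC.
  have -> : w i + w i * z i - mu * w i = w i * (1 + (z i - mu)) by ring.
  rewrite mulrCA; apply: ler_wpM2l; first exact: w0.
  by apply: ler_wpM2l; [exact: expR_ge0 | exact: expR_ge1Dx].
apply: le_trans (ler_sum _ tangent).
rewrite -mulr_sumr sumrB big_split /= -/W -mulr_sumr /mu divfK ?gt_eqF //.
by rewrite addrK mulrC.
Qed.

End LnConvexity.

Definition girth8_excess {R : pzRingType} (e m n : R) : R :=
  e * (e - m) * (e - n) + e * m * n - m ^+ 2 * n ^+ 2.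

Section Girth8Excess.
Variable R : realFieldType.

Lemma girth8_excess_sym (e m n : R) : girth8_excess e m n = girth8_excess e n m.
Proof. by rewrite /girth8_excess; ring. Qed.

Lemma girth8_excess_le0_sparse (e m n : nat) :
  (e <= m * n)%N -> (e <= m)%N || (e <= n)%N ->
  girth8_excess (e%:R : R) m%:R n%:R <= 0.
Proof.
wlog em : m n / (e <= m)%N => [W emn small|].
  case/orP: (small) => [em|en]; first exact: W.
  by rewrite girth8_excess_sym; apply: W; rewrite // 1?mulnC // en.
move=> emn _; rewrite -(ler_nat R) natrM in emn; rewrite -(ler_nat R) in em.
rewrite /girth8_excess.
have [m0 n0] : 0 <= m%:R :> R /\ 0 <= n%:R :> R by [].
have mn_mn : (e%:R : R) * (m%:R * n%:R) <= m%:R * n%:R * (m%:R * n%:R).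
  by apply: ler_wpM2r => //; apply: mulr_ge0.
have [en|ne] := leqP e n; last first.
  have : 0 <= (e%:R : R) * (m%:R - e%:R) * (e%:R - n%:R).
    by rewrite !mulr_ge0 // subr_ge0 // ltW // ltr_nat.
  lra.
have [->|e1] := posnP e.
  by rewrite mulr0n !mul0r add0r sub0r oppr_le0 mulr_ge0 ?exprn_ge0.
rewrite -(ler_nat R) in en; rewrite -(ler1n R) in e1.
set E := e%:R : R; set M := m%:R : R; set N := n%:R : R.
set X := (M - 1) * (N - 1) + M * N.
have M1 : 1 <= M by lra.
have N1 : 1 <= N by lra.
have MN1 : 0 <= M * (N - 1) by apply: mulr_ge0; lra.
have XMN : X <= M * N ^+ 2.
  have : 0 <= (N - 1) * (M * (N - 1) + 1) by apply: mulr_ge0; lra.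
  rewrite /X expr2; lra.
have X0 : 0 <= X by rewrite /X; apply: addr_ge0; apply: mulr_ge0; lra.
have : E * ((M - E) * (N - E) + M * N) <= E * X.
  by apply: ler_wpM2l; [lra | rewrite /X lerD2r; apply: ler_pM; lra].
have : E * X <= M * X by apply: ler_wpM2r.
have : M * X <= M * (M * N ^+ 2) by apply: ler_wpM2l.
rewrite !expr2; lra.
Qed.

Lemma girth8_excess_isolated (e m n : nat) : (0 < m)%N -> (n <= e)%N ->
  girth8_excess (e%:R : R) m%:R n%:R <= 0 -> girth8_excess (e%:R : R) m.+1%:R n%:R <= 0.
Proof.
rewrite -(ler1n R) -(ler_nat R) -natr1 => m1 ne G0.
set E := e%:R : R; set M := m%:R : R; set N := n%:R : R.
have -> : girth8_excess E (M + 1) N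
    = ((M + 1) * girth8_excess E M N - (E ^+ 2 * (E - N) + (M + 1) * M * N ^+ 2)) / M.
  by rewrite /girth8_excess; field; lra.
rewrite pmulr_lle0 ?invr_gt0; last lra.
have : 0 <= E ^+ 2 * (E - N) + (M + 1) * M * N ^+ 2.
  by apply: addr_ge0; apply: mulr_ge0; rewrite ?exprn_ge0 ?mulr_ge0 //; lra.
have : (M + 1) * girth8_excess E M N <= 0 by apply: mulr_ge0_le0; lra.
lra.
Qed.

Lemma girth8_excess_leaf (e m n : nat) :
  (0 < m)%N -> (0 < n)%N -> (m <= e)%N -> (n <= e.+1)%N ->
  girth8_excess (e%:R : R) m%:R n%:R <= 0 -> girth8_excess (e.+1%:R : R) m.+1%:R n%:R <= 0.
Proof.
move=> m1 n1 me ne G0.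
(* [(m + n - e) (e + 1) e <= (m + 1) m n^2], without truncated subtraction *)
have br_nat : ((m + n) * e.+1 * e <= e * e.+1 * e + m.+1 * m * n ^ 2)%N.
  have [mne|emn] := leqP (m + n) e; first nia.
  have h1 : (e.+1 * (m + n) <= m.+1 * n + e.+1 * e)%N by nia.
  have h2 : (e <= m * n)%N by nia.
  have := leq_mul h1 h2; nia.
have := br_nat; rewrite -(ler_nat R) !(natrM, natrD, natrX) -!natr1.
rewrite -(ler1n R) in m1; rewrite -(ler_nat R) in me.
set E := e%:R : R; set M := m%:R : R; set N := n%:R : R => br.
have -> : girth8_excess (E + 1) (M + 1) N = ((M + 1) * (E + 1) * girth8_excess E M N
    - (E - M) * ((E - M - N) * (E + 1) * E + (M + 1) * M * N ^+ 2)) / (M * E).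
  by rewrite /girth8_excess; field; apply/andP; split; apply/eqP; lra.
rewrite pmulr_lle0 ?invr_gt0 ?mulr_gt0 //; try lra.
have : 0 <= (E - M) * ((E - M - N) * (E + 1) * E + (M + 1) * M * N ^+ 2).
  by apply: mulr_ge0; lra.
have : (M + 1) * (E + 1) * girth8_excess E M N <= 0.
  by apply: mulr_ge0_le0 => //; apply: mulr_ge0; lra.
lra.
Qed.

(* [s^4 + 2/3 s^3 - 2/9 s^2 - 20/81 s] truncates the expansion in powers of [s] of
   the positive root of [e |-> girth8_excess e (s^3) (s^3)], and the excess is still
   positive there. *)
Lemma girth8_excess_root_lt (s e : R) : 1 <= s -> girth8_excess e (s ^+ 3) (s ^+ 3) <= 0 ->
  e < s ^+ 4 + 2 / 3 * s ^+ 3 - 2 / 9 * s ^+ 2 - 20 / 81 * s.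
Proof.
move=> s1 G0; set b := _ - _; rewrite ltNge; apply/negP => be; set S := s ^+ 3.
have s2 : s <= s ^+ 2 by rewrite expr2; nra.
have s3 : s ^+ 2 <= s ^+ 3 by have := exprn_ege1 2 s1; rewrite exprS; nra.
have s4 : s ^+ 3 <= s ^+ 4 by have := exprn_ege1 3 s1; rewrite (exprS s 3); nra.
have Gb : 0 < girth8_excess b S S.
  have -> : girth8_excess b S S = 8 / 3 ^+ 12 * S *
      (10935 * s ^+ 4 + 11421 * s ^+ 3 - 2430 * s ^+ 2 - 2700 * s - 1000).
    by rewrite /b /S /girth8_excess; field.
  apply: mulr_gt0; first by rewrite mulr_gt0 ?exprn_gt0 //; lra.
  lra.
pose Q := ((e - S + (b - S) + S) ^+ 2 + (e - S) ^+ 2 + (b - S) ^+ 2 + S ^+ 2) / 2.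
have : girth8_excess e S S - girth8_excess b S S = (e - b) * Q.
  by rewrite /girth8_excess /Q; field.
have : 0 <= (e - b) * Q by rewrite mulr_ge0 ?subr_ge0 // divr_ge0 // !addr_ge0 ?sqr_ge0.
lra.
Qed.

End Girth8Excess.

Section PathsLowerBound.
Variable R : realType.
Context {T1 T2 : finType} {E : T1 -> T2 -> bool} {A : {set T1}} {B : {set T2}}.
Hypothesis degA : forall x, x \in A -> (2 <= deg E B x)%N.
Hypothesis degB : forall y, y \in B -> (2 <= deg (converse E) A y)%N.

Let a x : R := (deg E B x)%:R.
Let b y : R := (deg (converse E) A y)%:R.

Lemma paths3_ge_expR :
  (edges E A B)%:R * expR ((\sum_(x in A) a x * ln (a x - 1)
    + \sum_(y in B) b y * ln (b y - 1)) / (edges E A B)%:R) <= (paths3 E A B)%:R.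
Proof.
have [e0|e_gt0] := posnP (edges E A B); first by rewrite e0 mul0r ler0n.
have a1 x : x \in A -> 0 < a x - 1 by move=> Ax; rewrite subr_gt0 ltr1n degA.
have b1 y : y \in B -> 0 < b y - 1 by move=> By; rewrite subr_gt0 ltr1n degB.
pose w (p : T1 * T2) : R := (E p.1 p.2)%:R.
pose z (p : T1 * T2) := ln (a p.1 - 1) + ln (b p.2 - 1).
have := @expR_mean_le R _ (fun p => (p.1 \in A) && (p.2 \in B)) w z (fun _ _ => ler0n _ _).
have pairE (F : T1 * T2 -> R) :
    \sum_(p | (p.1 \in A) && (p.2 \in B)) F p = \sum_(x in A) \sum_(y in B) F (x, y).
  by rewrite pair_big; apply: eq_bigr => -[].
rewrite !pairE.
have -> : \sum_(x in A) \sum_(y in B) w (x, y) = (edges E A B)%:R.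
  by rewrite natr_sum; apply: eq_bigr => x _; rewrite natr_sum.
have -> : \sum_(x in A) \sum_(y in B) w (x, y) * z (x, y)
    = \sum_(x in A) a x * ln (a x - 1) + \sum_(y in B) b y * ln (b y - 1).
  under eq_bigr do (under eq_bigr do rewrite mulrDr; rewrite big_split /=).
  rewrite big_split /=; congr (_ + _).
    by apply: eq_bigr => x _; rewrite -mulr_suml /a /deg natr_sum.
  by rewrite exchange_big; apply: eq_bigr => y _; rewrite -mulr_suml /b /deg natr_sum.
have -> : \sum_(x in A) \sum_(y in B) w (x, y) * expR (z (x, y)) = (paths3 E A B)%:R.
  rewrite natr_sum; apply: eq_bigr => x Ax; rewrite natr_sum; apply: eq_bigr => y By.
  by rewrite expRD !lnK ?posrE ?a1 ?b1 // !natrM !natr_pred // ltnW ?degA ?degB.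
by apply; rewrite ltr0n.
Qed.

Lemma edges_cubic_le_paths3 :
  (edges E A B)%:R * ((edges E A B)%:R - #|A|%:R) * ((edges E A B)%:R - #|B|%:R)
    <= #|A|%:R * #|B|%:R * (paths3 E A B)%:R :> R.
Proof.
set e := (edges E A B)%:R; set m := #|A|%:R; set n := #|B|%:R.
have [A0|A_gt0] := posnP #|A|.
  have := edges_le_mul E A B; rewrite A0 mul0n leqn0 => /eqP e0.
  by rewrite /e e0 !mul0r mulr_ge0 ?mulr_ge0.
have [B0|B_gt0] := posnP #|B|.
  have := edges_le_mul E A B; rewrite B0 muln0 leqn0 => /eqP e0.
  by rewrite /e e0 !mul0r mulr_ge0 ?mulr_ge0.
have eA : e = \sum_(x in A) a x by rewrite /e natr_sum.
have eB : e = \sum_(y in B) b y by rewrite /e -edges_converse natr_sum.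
have a2 x : x \in A -> 2 <= a x by move=> Ax; rewrite (ler_nat R 2) degA.
have b2 y : y \in B -> 2 <= b y by move=> By; rewrite (ler_nat R 2) degB.
have m0 : 0 < m by rewrite ltr0n.
have n0 : 0 < n by rewrite ltr0n.
have em : 2 * m <= e by rewrite eA mulrC mulr_natl -sumr_const ler_sum.
have en : 2 * n <= e by rewrite eB mulrC mulr_natl -sumr_const ler_sum.
have em1 : 0 < e / m - 1 by rewrite subr_gt0 ltr_pdivlMr // mul1r; lra.
have en1 : 0 < e / n - 1 by rewrite subr_gt0 ltr_pdivlMr // mul1r; lra.
have JA := @jensen_mul_ln_subr1 R _ A a A_gt0 a2; rewrite -eA -/m in JA.
have JB := @jensen_mul_ln_subr1 R _ B b B_gt0 b2; rewrite -eB -/n in JB.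
have mean_ge : ln ((e / m - 1) * (e / n - 1))
    <= (\sum_(x in A) a x * ln (a x - 1) + \sum_(y in B) b y * ln (b y - 1)) / e.
  by rewrite lnM ?posrE // ler_pdivlMr ?mulrDr; lra.
have : e * ((e / m - 1) * (e / n - 1)) <= (paths3 E A B)%:R.
  apply: le_trans paths3_ge_expR; apply: ler_wpM2l; first exact: ler0n.
  by rewrite -[X in X <= _]lnK ?posrE ?mulr_gt0 // ler_expR.
have -> : e * (e - m) * (e - n) = m * n * (e * ((e / m - 1) * (e / n - 1))).
  by field; rewrite !gt_eqF.
by apply: ler_wpM2l; rewrite mulr_ge0 // ltW.
Qed.

End PathsLowerBound.

Lemma girth8_excess_del {R : realFieldType} {T1 T2 : finType} {E : T1 -> T2 -> bool}
    {A : {set T1}} {B : {set T2}} {x : T1} :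
  x \in A -> (deg E B x <= 1)%N ->
  (#|A| < edges E A B)%N -> (#|B| < edges E A B)%N ->
  girth8_excess (edges E (A :\ x) B)%:R #|A :\ x|%:R #|B|%:R <= 0 :> R ->
  girth8_excess (edges E A B)%:R #|A|%:R #|B|%:R <= 0 :> R.
Proof.
move=> Ax dx; have mn := edges_le_mul E A B.
rewrite (edges_setD1 E A B x Ax) (cardsD1 x A) Ax add1n in mn *.
move: dx mn; case: (deg E B x) => [|[|//]] _ mn Ae Be.
- by apply: girth8_excess_isolated; nia.
- by rewrite add1n; apply: girth8_excess_leaf; nia.
Qed.

Theorem girth8_excess_le0 (R : realType) {T1 T2 : finType} (E : T1 -> T2 -> bool) :
  C4free E -> C6free E ->
  forall A B, girth8_excess (edges E A B)%:R #|A|%:R #|B|%:R <= 0 :> R.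
Proof.
move=> C4 C6 A B; have [k] := ubnP (#|A| + #|B|); elim: k A B => // k IH A B /ltnSE sizeAB.
have [sparse|] := boolP ((edges E A B <= #|A|) || (edges E A B <= #|B|))%N.
  exact: girth8_excess_le0_sparse (edges_le_mul E A B) sparse.
rewrite negb_or -!ltnNge => /andP[Ae Be].
have [x /andP[Ax dx]|degA] := pickP [pred x in A | deg E B x <= 1]%N.
  apply: (girth8_excess_del Ax dx Ae Be); apply: IH.
  by rewrite (cardsD1 x A) Ax add1n addSn in sizeAB.
have [y /andP[By dy]|degB] := pickP [pred y in B | deg (converse E) A y <= 1]%N.
  rewrite girth8_excess_sym -edges_converse.
  apply: (girth8_excess_del By dy); rewrite edges_converse //.
  rewrite girth8_excess_sym; apply: IH.
  by rewrite (cardsD1 y B) By add1n addnS in sizeAB.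
have deg2 T (D : {set T}) (d : T -> nat) : [pred z in D | d z <= 1]%N =1 xpred0 ->
    forall z, z \in D -> (2 <= d z)%N.
  by move=> no_z z Dz; have := no_z z; rewrite /= Dz ltnNge /= => ->.
have := paths3_add_edges_le E C4 C6 A B; rewrite -(ler_nat R) natrD natrM => le_mn.
have := edges_cubic_le_paths3 R (deg2 _ _ _ degA) (deg2 _ _ _ degB).
have := ler_wpM2l (mulr_ge0 (ler0n R #|A|) (ler0n R #|B|)) le_mn.
rewrite /girth8_excess !expr2; lra.
Qed.

Theorem corollary4p9 (R : realType) (v : nat) (E : 'I_v -> 'I_v -> bool) :
  (0 < v)%N ->
  girth_ge (bip_adj E) 8 ->
  (bip_edges E)%:R < (v%:R : R) `^ (4 / 3) + 2 / 3 * v%:R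
                     - 2 / 9 * (v%:R : R) `^ (2 / 3) - 20 / 81 * (v%:R : R) `^ (1 / 3).
Proof.
move=> v0 G.
have := girth8_excess_le0 R E (girth8_C4free G) (girth8_C6free G) [set: 'I_v] [set: 'I_v].
rewrite cardsT card_ord -bip_edgesE.
set s := (v%:R : R) `^ (1 / 3).
have spow k : s ^+ k = (v%:R : R) `^ (k%:R / 3).
  by rewrite -powR_mulrn ?powR_ge0 // -powRrM mul1r mulrC.
have s3 : s ^+ 3 = v%:R by rewrite spow divff ?powRr1 ?ler0n.
have s1 : 1 <= s.
  rewrite -(powRr0 (v%:R : R)); apply: ler_powR; rewrite ?ler1n // divr_ge0.
by rewrite -(spow 4) -(spow 2) -s3; apply: girth8_excess_root_lt.
Qed.
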